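(* If $\omega\in\Lambda^s(n,n;r)$ and $\pi\in\Lambda^t(n,n;r)$, then $\xi_\omega\xi_\pi\in J^R_{s+t}(n,r)$.
   Context: $R$ commutative ring with identity, $n,r$ positive integers. $I(n,r)=\{1,\dots,n\}^r$; $\Lambda(n,n;r)$: $n\times n$ matrices of nonnegative integers with total sum $r$. For $i,j\in I(n,r)$, $\operatorname{wt}(i,j)_{st}=\#\{q:i_q=s,j_q=t\}$, $(i,j)\in\omega$ means $\operatorname{wt}(i,j)=\omega$. $S_R(n,r)=\mathrm{End}_{R\Sigma_r}((R^n)^{\otimes r})$ ($\Sigma_r$ permuting tensor positions: $e_i\sigma=e_{i\sigma}$, $(i\sigma)_q=i_{\sigma(q)}$); $\xi_\omega=\sum_{(i,j)\in\omega}e_{i,j}$, where $e_{i,j}e_k=\delta_{jk}e_i$. For $s\ge0$, $\Lambda^s(n,n;r)$ is the set of upper triangular $\omega\in\Lambda(n,n;r)$ with $\sum_{1\le k\le l\le n}(l-k)\omega_{kl}\ge s$, and $J^R_s(n,r)$ is the $R$-submodule of $S_R(n,r)$ spanned by $\{\xi_\omega:\omega\in\Lambda^s(n,n;r)\}$. *)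

From mathcomp Require Import all_boot all_order all_algebra.
Set Implicit Arguments. Unset Strict Implicit. Unset Printing Implicit Defensive.
Import GRing.Theory.

(* I(n,r) = {1..n}^r, indices shifted to 0..n-1 *)
Definition multi_index (n r : nat) := {ffun 'I_r -> 'I_n}.

Definition wt (n r : nat) (i j : multi_index n r) : 'M[nat]_n :=
  \matrix_(s, t) #|[set q : 'I_r | (i q == s) && (j q == t)]|.

Definition in_Lambda (n r : nat) (w : 'M[nat]_n) : Prop :=
  (\sum_(k < n) \sum_(l < n) w k l)%N = r.

Definition in_Lambda_s (n r s : nat) (w : 'M[nat]_n) : Prop :=
  [/\ in_Lambda r w,
      (forall k l : 'I_n, (l < k)%N -> w k l = 0%N) &
      (s <= \sum_(k < n) \sum_(l < n | (k <= l)%N) (l - k) * w k l)%N].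

(* Elements of End_R((R^n)^{\otimes r}) are represented by their matrices
   with respect to the basis (e_i)_{i in I(n,r)}: A k l is the coefficient
   of e_k in A(e_l). *)
Definition endo (R : comPzRingType) (n r : nat) :=
  multi_index n r -> multi_index n r -> R.

Definition eunit (R : comPzRingType) (n r : nat) (i j : multi_index n r)
  : endo R n r :=
  fun k l => if (k == i) && (l == j) then 1%R else 0%R.

Definition endo_mul (R : comPzRingType) (n r : nat) (A B : endo R n r)
  : endo R n r :=
  fun k l => (\sum_(m : multi_index n r) A k m * B m l)%R.

Definition xi (R : comPzRingType) (n r : nat) (w : 'M[nat]_n) : endo R n r :=
  fun k l => (\sum_(p : multi_index n r * multi_index n r | wt p.1 p.2 == w)
               eunit R p.1 p.2 k l)%R.

Definition in_J (R : comPzRingType) (n r s : nat) (A : endo R n r) : Prop :=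
  exists c : seq (R * 'M[nat]_n),
    (forall p, p \in c -> in_Lambda_s r s p.2) /\
    (forall k l, A k l = (\sum_(p <- c) p.1 * @xi R n r p.2 k l)%R).

(** The coefficient of [e_{k,l}] in [xi_w * xi_p] is the number of [m] with
   [wt(k,m) = w] and [wt(m,l) = p].  Permuting tensor positions simultaneously
   in [k], [m], [l] preserves all weights, and any two pairs with the same
   weight differ by such a permutation; hence this count depends only on
   [wt(k,l)], and the product is an [R]-combination of the [xi_theta] with
   [theta] an occurring weight.  For such [theta], upper triangularity of [w]
   and [p] forces [k_q <= m_q <= l_q] for every position [q], so [theta] is
   upper triangular and [sum_q (l_q - k_q) = sum_q (m_q - k_q) + sum_q (l_q - m_q)
   >= s + t]. *)

From mathcomp Require Import all_boot all_order all_algebra.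
From mathcomp Require Import fingroup perm.
Set Implicit Arguments. Unset Strict Implicit. Unset Printing Implicit Defensive.
Import GRing.Theory.

Section Weights.
Variables n r : nat.
Implicit Types (i j k l m : multi_index n r) (w : 'M[nat]_n).

Lemma wtE i j a b : wt i j a b = (\sum_(q < r) ((i q == a) && (j q == b)))%N.
Proof.
rewrite mxE -sum1_card big_mkcond /=.
by apply: eq_bigr => q _; rewrite inE; case: andP.
Qed.

Lemma wt_gt0 i j q : (0 < wt i j (i q) (j q))%N.
Proof. by rewrite wtE (bigD1 q) //= !eqxx. Qed.

Lemma sum_wt i j (F : 'I_n -> 'I_n -> nat) :
  (\sum_(a < n) \sum_(b < n) F a b * wt i j a b)%N = (\sum_(q < r) F (i q) (j q))%N.
Proof.
under eq_bigr => a _ do under eq_bigr => b _ do rewrite wtE big_distrr /=.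
under eq_bigr => a _ do rewrite exchange_big /=.
rewrite exchange_big /=; apply: eq_bigr => q _.
rewrite (bigD1 (i q)) //= [X in (_ + X)%N]big1 => [|a ia]; last first.
  by rewrite big1 // => b _; rewrite eq_sym (negbTE ia) muln0.
rewrite addn0 (bigD1 (j q)) //= !eqxx muln1 big1 ?addn0 // => b jb.
by rewrite [_ == b]eq_sym (negbTE jb) andbF muln0.
Qed.

Lemma in_Lambda_wt i j : in_Lambda r (wt i j).
Proof.
rewrite /in_Lambda -[r in RHS]card_ord -sum1_card -(sum_wt i j (fun _ _ => 1%N)).
by apply: eq_bigr => a _; apply: eq_bigr => b _; rewrite mul1n.
Qed.

Definition upper_mx w := forall a b : 'I_n, (b < a)%N -> w a b = 0%N.

Lemma upper_wt_le i j q : upper_mx (wt i j) -> (i q <= j q)%N.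
Proof.
by move=> up; rewrite leqNgt; apply/negP => /up ji; have := wt_gt0 i j q; rewrite ji.
Qed.

Lemma sum_dist_wt w :
  (\sum_(k < n) \sum_(l < n | (k <= l)%N) (l - k) * w k l)%N =
  (\sum_(k < n) \sum_(l < n) (l - k) * w k l)%N.
Proof.
apply: eq_bigr => k _; rewrite big_mkcond /=; apply: eq_bigr => l _.
by case: leqP => // /ltnW; rewrite -subn_eq0 => /eqP ->.
Qed.

Lemma in_Lambda_s_wt_comp i m j s t :
  in_Lambda_s r s (wt i m) -> in_Lambda_s r t (wt m j) ->
  in_Lambda_s r (s + t) (wt i j).
Proof.
move=> [_ up_im dist_im] [_ up_mj dist_mj].
have le_ij q : (i q <= j q)%N.
  exact: leq_trans (upper_wt_le q up_im) (upper_wt_le q up_mj).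
split; first exact: in_Lambda_wt.
- move=> a b ba; rewrite wtE big1 // => q _.
  by case: andP => // -[/eqP iq /eqP jq]; move: ba; rewrite -iq -jq ltnNge le_ij.
- move: dist_im dist_mj; rewrite !sum_dist_wt !(sum_wt _ _ (fun a b => b - a)%N).
  move=> dist_im dist_mj; apply: leq_trans (leq_add dist_im dist_mj) _.
  rewrite -big_split /=; apply: leq_sum => q _.
  by rewrite addnC addnBA ?subnK ?(upper_wt_le q up_im) ?(upper_wt_le q up_mj).
Qed.

Definition perm_mi (g : 'S_r) i : multi_index n r := [ffun q => i (g q)].

Lemma perm_mi_inj g : injective (perm_mi g).
Proof.
move=> i j /ffunP eq_ij; apply/ffunP => q.
by have := eq_ij (g^-1 q)%g; rewrite !ffunE permKV.
Qed.

Lemma wt_perm_mi g i j : wt (perm_mi g i) (perm_mi g j) = wt i j.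
Proof.
apply/matrixP => a b; rewrite !wtE [in RHS](reindex_inj (@perm_inj _ g)) /=.
by apply: eq_bigr => q _; rewrite !ffunE.
Qed.

Definition pair_tuple i j : r.-tuple ('I_n * 'I_n) := [tuple (i q, j q) | q < r].

Lemma count_pair_tuple i j a b : count_mem (a, b) (pair_tuple i j) = wt i j a b.
Proof.
rewrite mxE /= count_map cardE /enum_mem size_filter count_filter.
by apply: eq_count => q; rewrite /= !inE xpair_eqE andbT.
Qed.

Lemma wt_eq_perm i j i' j' : wt i j = wt i' j' ->
  exists g : 'S_r, i' = perm_mi g i /\ j' = perm_mi g j.
Proof.
move=> eq_wt.
have /tuple_permP[g eq_pairs] : perm_eq (pair_tuple i' j') (pair_tuple i j).
  by apply/allP => [[a b]] _; apply/eqP; rewrite !count_pair_tuple eq_wt.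
have eq_at q : (i' q, j' q) = (i (g q), j (g q)).
  have := congr1 (fun x => nth (i q, j q) x q) eq_pairs.
  by rewrite -!tnth_nth !tnth_map !tnth_ord_tuple.
by exists g; split; apply/ffunP => q; rewrite ffunE; case: (eq_at q).
Qed.

Definition path_count w p k l :=
  (\sum_(m : multi_index n r) ((wt k m == w) && (wt m l == p)))%N.

Lemma path_count_wt w p k l k' l' :
  wt k l = wt k' l' -> path_count w p k l = path_count w p k' l'.
Proof.
move=> /wt_eq_perm[g [-> ->]].
rewrite /path_count [in RHS](reindex_inj (@perm_mi_inj g)) /=.
by apply: eq_bigr => m _; rewrite !wt_perm_mi.
Qed.

Lemma path_count_neq0 w p k l : path_count w p k l != 0%N ->
  exists m, wt k m = w /\ wt m l = p.
Proof.
rewrite sum_nat_eq0 => /forallPn[m]; rewrite /= eqb0 negbK.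
by case/andP => /eqP wt_km /eqP wt_ml; exists m.
Qed.

End Weights.

Local Open Scope ring_scope.

Section Span.
Variables (R : comPzRingType) (n r : nat).
Implicit Types (k l : multi_index n r) (A : endo R n r).

Lemma xiE (w : 'M[nat]_n) k l : @xi R n r w k l = (wt k l == w)%:R.
Proof.
rewrite /xi big_mkcond /= (bigD1 (k, l)) //= big1 ?addr0 => [|[a b] ab].
  by rewrite /eunit !eqxx; case: (wt k l == w).
case: ifP => // _; rewrite /eunit; case: ifP => // /andP[/eqP ka /eqP lb].
by move: ab; rewrite ka lb eqxx.
Qed.

Lemma xi_mulE (w p : 'M[nat]_n) k l :
  endo_mul (@xi R n r w) (@xi R n r p) k l = (path_count w p k l)%:R.
Proof.
rewrite /endo_mul /path_count natr_sum; apply: eq_bigr => m _.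
by rewrite !xiE -natrM mulnb.
Qed.

Lemma in_J_wt_invariant u A :
  (forall k l k' l', wt k l = wt k' l' -> A k l = A k' l') ->
  (forall k l, A k l != 0 -> in_Lambda_s r u (wt k l)) ->
  in_J u A.
Proof.
move=> A_wt A_supp.
pose T := (multi_index n r * multi_index n r)%type.
pose S := undup [seq wt x.1 x.2 | x <- enum {: T} & A x.1 x.2 != 0].
pose coef (th : 'M[nat]_n) :=
  if [pick x : T | wt x.1 x.2 == th] is Some x then A x.1 x.2 else 0.
exists [seq (coef th, th) | th <- S]; split.
  move=> c /mapP[th]; rewrite mem_undup => /mapP[x].
  by rewrite mem_filter => /andP[/A_supp ? _] -> ->.
move=> k l; rewrite big_map; under eq_bigr => th _ do rewrite /= xiE.
have [kl_S | kl_notS] := boolP (wt k l \in S).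
  rewrite (bigD1_seq (wt k l)) ?undup_uniq //= eqxx mulr1 big1 => [|th th_kl].
    rewrite addr0 /coef; case: pickP => [x /eqP/A_wt -> //|].
    by move/(_ (k, l)); rewrite eqxx.
  by rewrite eq_sym (negbTE th_kl) mulr0.
rewrite big1_seq => [|th /andP[_ th_S]]; last first.
  by case: eqP => [kl_th|]; [move: kl_notS; rewrite kl_th th_S | rewrite mulr0].
apply: contraNeq kl_notS => Akl; rewrite mem_undup.
by apply/mapP; exists (k, l); rewrite // mem_filter Akl mem_enum.
Qed.

End Span.

Theorem proposition4p2 (R : comPzRingType) (n r s t : nat)
  (hn : (0 < n)%N) (hr : (0 < r)%N) (w p : 'M[nat]_n)
  (hw : in_Lambda_s r s w) (hp : in_Lambda_s r t p) :
  in_J (s + t) (endo_mul (@xi R n r w) (@xi R n r p)).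
Proof.
apply: in_J_wt_invariant => [k l k' l' kl_k'l' | k l].
  by rewrite !xi_mulE (path_count_wt w p kl_k'l').
rewrite xi_mulE => count_neq0.
have [|m [wt_km wt_ml]] := @path_count_neq0 n r w p k l.
  by apply: contraNneq count_neq0 => ->.
by apply: (in_Lambda_s_wt_comp (m := m)); [rewrite wt_km | rewrite wt_ml].
Qed.
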